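(* Let $Y_1,Y_2,\ldots$ be i.i.d. Bernoulli$(1/2)$ and let $(Z^k)_k$ be generated by the bit-drop scheme described in the context, independently of $(Y_i)$. For integers $l\ge 1,k\ge 0$ let $L^a_l(k)$ be the length of a longest common subsequence of $Z^k$ and $Y_1\ldots Y_l$. Let $\delta:\mathbb{R}\to\mathbb{R}$ be a function with $\lim_{\epsilon\to0}\delta(\epsilon)=0$ such that for every $\epsilon>0$ there exist $c,C>0$ with $P\big(L^a_l(\lfloor 2l(1-\delta(\epsilon))\rfloor)>l(1-\epsilon)\big)\le Ce^{-cl}$ for all $l>0$. Let $\epsilon>0$ be such that $$\frac{0.5}{1-\delta(\epsilon)}<0.65.$$ Define $E^n_3:=\bigcap_{l=\lceil0.2n\rceil}^n\{L^a_l(\lfloor 2l(1-\delta(\epsilon))\rfloor)\le(1-\epsilon)l\}$, $E^n_{4k}:=\{L^a_n(k)\ge 0.65k\}$, $E^n_4:=\bigcap_{k=\lceil 0.45n\rceil}^n E^n_{4k}$, and $$E^n_{6k}:=\{L^a_n(k)\leq(1-\epsilon)\,\eta(L^a_n(k))\ \text{for all }(\pi,\eta)\in M^k\},\qquad E^n_6:=\bigcap_{k=\lceil0.45n\rceil}^nE^n_{6k}.$$ Then for all $k>0.45n$ (with $k\le n$), $E^n_3\cap E^n_{4k}\subset E^n_{6k}$, and consequently $E^n_3\cap E^n_4\subset E^n_6$.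
   Context: Bit-drop scheme: let $V_1,V_2,\ldots$ be i.i.d. Bernoulli$(1/2)$ and let $T_3,T_4,\ldots$ be independent, independent of $(V_k)$, with $T_{k+1}$ uniform on $\{2,\ldots,k\}$. Set $Z^2:=V_1V_2$ and, given $Z^k=Z^k_1\ldots Z^k_k$, define $Z^{k+1}_j:=Z^k_j$ for $j<T_{k+1}$, $Z^{k+1}_{T_{k+1}}:=V_{k+1}$, $Z^{k+1}_j:=Z^k_{j-1}$ for $T_{k+1}<j\le k+1$. A pair of matching subsequences of $Z^k$ and $Y_1\ldots Y_n$ of length $m$ is a pair $(\pi,\eta)$ of strictly increasing maps $\pi:\{1,\ldots,m\}\to\{1,\ldots,k\}$, $\eta:\{1,\ldots,m\}\to\{1,\ldots,n\}$ with $Z^k_{\pi(i)}=Y_{\eta(i)}$ for all $i$. Let $M^k_2$ be the set of such pairs of maximal length (length $L^a_n(k)$). Order pairs of the same length componentwise: $(\pi_1,\eta_1)\le(\pi_2,\eta_2)$ iff $\pi_1(i)\le\pi_2(i)$ and $\eta_1(i)\le\eta_2(i)$ for all $i$. Let $M^k\subset M^k_2$ be the set of minimal elements of $M^k_2$ for this partial order. *)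

From HB Require Import structures.
From mathcomp Require Import all_boot all_order all_algebra.
From mathcomp Require Import all_classical all_reals all_analysis.
Set Implicit Arguments. Unset Strict Implicit. Unset Printing Implicit Defensive.
Import Order.TTheory GRing.Theory Num.Theory.

Local Open Scope classical_set_scope.

(* insert bit b so that it becomes the t-th letter (1-based) of the result *)
Definition ins_at (t : nat) (b : bool) (s : seq bool) : seq bool :=
  take t.-1 s ++ b :: drop t.-1 s.

(* Z^k built from V_1 V_2 ... and T_3 T_4 ... (1-based indices).  Convention for k < 2: Z^0 = empty word, Z^1 = V_1. *)
Fixpoint Zword (V : nat -> bool) (T : nat -> nat) (k : nat) : seq bool :=
  match k with
  | 0 => [::]
  | k'.+1 => if k' < 2 then rcons (Zword V T k') (V k)
             else ins_at (T k) (V k) (Zword V T k')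
  end.

Definition Yword (Y : nat -> bool) (n : nat) : seq bool := mkseq (fun i => Y i.+1) n.

Definition lcs (s t : seq bool) : nat :=
  \max_(m < (size s).+1 | [exists w : m.-tuple bool, subseq w s && subseq w t]) m.

(* A pair (pi, eta) of strictly increasing maps {1..m} -> {1..size s},
   {1..m} -> {1..size t} with s_{pi(i)} = t_{eta(i)}; pi(i) is the
   (i-1)-th entry of the list p (likewise eta and q). *)
Definition matching_pair (s t : seq bool) (p q : seq nat) : Prop :=
  [/\ size p = size q, sorted ltn p, sorted ltn q,
      all (fun i => 0 < i <= size s) p &
      all (fun j => 0 < j <= size t) q] /\
      forall i, i < size p -> nth false s (nth 0 p i).-1 = nth false t (nth 0 q i).-1.

Definition maximal_pair (s t : seq bool) (p q : seq nat) : Prop :=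
  matching_pair s t p q /\ size p = lcs s t.

Definition pair_le (p1 q1 p2 q2 : seq nat) : Prop :=
  size p1 = size p2 /\ size q1 = size q2 /\
  forall i, i < size p1 -> nth 0 p1 i <= nth 0 p2 i /\ nth 0 q1 i <= nth 0 q2 i.

(* M : minimal elements of M_2 *)
Definition minimal_pair (s t : seq bool) (p q : seq nat) : Prop :=
  maximal_pair s t p q /\
  forall p' q', maximal_pair s t p' q' -> pair_le p' q' p q -> p' = p /\ q' = q.

Inductive rv_idx := IY of nat | IV of nat | IT of nat.

Definition rv_idx_code (x : rv_idx) : nat + nat + nat :=
  match x with IY i => inl (inl i) | IV i => inl (inr i) | IT i => inr i end.
Definition rv_idx_decode (x : nat + nat + nat) : rv_idx :=
  match x with inl (inl i) => IY i | inl (inr i) => IV i | inr i => IT i end.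
Lemma rv_idx_codeK : cancel rv_idx_code rv_idx_decode. Proof. by case. Qed.
HB.instance Definition _ := Equality.copy rv_idx (can_type rv_idx_codeK).

Definition rv_idx_ok (x : rv_idx) : bool :=
  match x with IY i => 0 < i | IV i => 0 < i | IT i => 2 < i end.

(* value of the variable with index x (booleans coded as 0/1) *)
Definition rv_val (Y V : nat -> bool) (T : nat -> nat) (x : rv_idx) : nat :=
  match x with IY i => Y i | IV i => V i | IT i => T i end.

Definition all_independent {R : realType} {d : measure_display}
  {Omega : measurableType d} (P : probability Omega R)
  (Y V : nat -> Omega -> bool) (T : nat -> Omega -> nat) : Prop :=
  forall (s : seq rv_idx) (x : rv_idx -> nat),
    uniq s -> all rv_idx_ok s ->
    P (\bigcap_(i in [set i | i \in s])
         [set w | rv_val (Y ^~ w) (V ^~ w) (T ^~ w) i = x i]) =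
    (\prod_(i <- s) P [set w | rv_val (Y ^~ w) (V ^~ w) (T ^~ w) i = x i])%E.

Definition La {Omega : Type} (Y V : nat -> Omega -> bool) (T : nat -> Omega -> nat)
  (l k : nat) (w : Omega) : nat :=
  lcs (Zword (V ^~ w) (T ^~ w) k) (Yword (Y ^~ w) l).

(* Let (p, q) be a maximal matching pair
   of Z^k and Y_1..Y_n, and l its last index in Y.  The common subsequence it
   exhibits lies in Y_1..Y_l, so L^a_n(k) = L^a_l(k) <= l.  On E_4k this gives
   l >= 0.65 k, hence l >= 0.2 n and, since 0.5 / (1 - delta eps) < 0.65,
   k <= 2 l (1 - delta eps).  As Z^k is a subsequence of every later Z^k', the
   event E_3 at index l then yields L^a_n(k) <= (1 - eps) l. *)

From HB Require Import structures.
From mathcomp Require Import all_boot all_order all_algebra.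
From mathcomp Require Import all_classical all_reals all_analysis.
From mathcomp Require Import lra.
Import Order.TTheory GRing.Theory Num.Theory.

Set Implicit Arguments.
Unset Strict Implicit.
Unset Printing Implicit Defensive.

Lemma common_subseq_leq_lcs (s t w : seq bool) :
  subseq w s -> subseq w t -> (size w <= lcs s t).
Proof.
move=> ws wt; have hw : (size w < (size s).+1) by rewrite ltnS size_subseq.
apply: (@leq_bigmax_cond _ _ (fun m : 'I_(size s).+1 => nat_of_ord m) (Ordinal hw)).
by apply/existsP; exists (in_tuple w); rewrite /= ws wt.
Qed.

Lemma lcs_leq_size_r (s t : seq bool) : (lcs s t <= size t).
Proof.
apply/bigmax_leqP => m /existsP [w /andP [_ wt]].
by rewrite -(size_tuple w) size_subseq.
Qed.

Lemma lcs_subseq_l (s s' t : seq bool) : subseq s s' -> (lcs s t <= lcs s' t).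
Proof.
move=> ss'; apply/bigmax_leqP => m /existsP [w /andP [ws wt]].
by rewrite -(size_tuple w); apply: common_subseq_leq_lcs (subseq_trans ws ss') wt.
Qed.

Lemma sorted_leq_last (q : seq nat) j : sorted leq q -> j \in q -> (j <= last 0 q).
Proof.
move=> sq jq; have q_gt0 : (0 < size q) by case: q jq sq.
rewrite -(nth_index 0 jq) -nth_last.
apply: (sorted_leq_nth leq_trans leqnn) => //; rewrite ?inE ?prednK //.
  by rewrite index_mem.
by rewrite -ltnS prednK // index_mem.
Qed.

Lemma sorted_ltn_subseq_iota (p : seq nat) m n :
  sorted ltn p -> {subset p <= iota m n} -> subseq p (iota m n).
Proof.
move=> sp p_iota.
have -> : p = [seq x <- iota m n | x \in p].
  apply: (irr_sorted_eq ltn_trans ltnn) => //.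
    exact/sorted_filter/iota_ltn_sorted/ltn_trans.
  by move=> x; rewrite mem_filter andb_idr // => /p_iota.
exact: filter_subseq.
Qed.

Lemma subseq_map_nth_pred (s : seq bool) (p : seq nat) :
  sorted ltn p -> all (fun i => 0 < i <= size s) p ->
  subseq [seq nth false s i.-1 | i <- p] s.
Proof.
move=> sp p_in; rewrite -{2}(mkseq_nth false s) /mkseq.
have -> : iota 0 (size s) = [seq i.-1 | i <- iota 1 (size s)].
  by rewrite -(addn0 1) iotaDl -map_comp map_id_in.
rewrite -map_comp; apply/map_subseq/sorted_ltn_subseq_iota => //.
by move=> i /(allP p_in); rewrite mem_iota add1n ltnS.
Qed.

Section MatchingPair.

Variables (s t : seq bool) (p q : seq nat).
Hypothesis pq : matching_pair s t p q.

Lemma matching_pair_last_leq : (last 0 q <= size t).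
Proof.
have [[_ _ _ _ /allP q_in] _] := pq.
by have := mem_last 0 q; rewrite inE => /orP [/eqP -> // | /q_in /andP []].
Qed.

Lemma matching_pair_size_leq_lcs_take : (size p <= lcs s (take (last 0 q) t)).
Proof.
have [[spq sp sq p_in q_in] eq_nth] := pq.
set l := last 0 q.
have q_le_l j : j \in q -> (j <= l).
  by apply: sorted_leq_last; rewrite ltn_sorted_uniq_leq in sq; case/andP: sq.
have q_in_take : all (fun j => 0 < j <= size (take l t)) q.
  apply/allP => j jq; move/allP/(_ j jq)/andP: q_in => [-> _] /=.
  by rewrite size_take_min leq_min q_le_l //= (leq_trans (q_le_l j jq)) ?matching_pair_last_leq.
have w_eq : [seq nth false s i.-1 | i <- p] = [seq nth false (take l t) j.-1 | j <- q].
  apply: (@eq_from_nth _ false); rewrite !size_map // => i ip.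
  rewrite !(nth_map 0) -?spq // eq_nth // nth_take //.
  have qi : nth 0 q i \in q by rewrite mem_nth -?spq.
  move/allP/(_ _ qi)/andP: q_in => [qi_gt0 _].
  by rewrite prednK // q_le_l.
rewrite -(size_map (fun i => nth false s i.-1)).
apply: common_subseq_leq_lcs; first exact: subseq_map_nth_pred.
by rewrite w_eq; apply: subseq_map_nth_pred.
Qed.

End MatchingPair.

Lemma subseq_Zword_S V T k : subseq (Zword V T k) (Zword V T k.+1).
Proof.
rewrite /=; case: ifP => _; first exact: subseq_rcons.
rewrite /ins_at -{1}(cat_take_drop (T k.+1).-1 (Zword V T k)).
exact/cat_subseq/subseq_cons.
Qed.

Lemma subseq_Zword V T k k' : (k <= k') -> subseq (Zword V T k) (Zword V T k').
Proof.
move/subnK => <-; elim: (k' - k) => [|j IH] //=.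
exact: subseq_trans IH (subseq_Zword_S _ _ _).
Qed.

Lemma size_Yword Y n : size (Yword Y n) = n.
Proof. exact: size_mkseq. Qed.

Lemma take_Yword Y l n : l <= n -> take l (Yword Y n) = Yword Y l.
Proof. by move=> ln; rewrite /Yword /mkseq -map_take take_iota (minn_idPl ln). Qed.

Local Open Scope ring_scope.

Lemma leq_truncn_mul (R : archiRealFieldType) (a c : R) (k l : nat) :
  0 < a -> 2^-1 / a < c -> c * k%:R <= l%:R -> (k <= Num.truncn (2 * l%:R * a))%N.
Proof.
move=> a_gt0; rewrite ltr_pdivrMr // => ac ckl.
rewrite truncn_ge_nat; last by rewrite mulr_ge0 // ltW.
have : 0 <= (2 * (c * a) - 1) * k%:R by rewrite mulr_ge0 // subr_ge0; lra.
have : 0 <= a * (l%:R - c * k%:R) by rewrite mulr_ge0 ?subr_ge0 // ltW.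
lra.
Qed.

Local Open Scope classical_set_scope.

Theorem lemma9 (R : realType) (d : measure_display) (Omega : measurableType d)
  (P : probability Omega R)
  (Y V : nat -> Omega -> bool) (T : nat -> Omega -> nat)
  (* Y_i, V_i i.i.d. Bernoulli(1/2); T_{k+1} uniform on {2,...,k};
     all of them mutually independent *)
  (mY : forall i, measurable_fun setT (Y i))
  (mV : forall i, measurable_fun setT (V i))
  (mT : forall i, measurable_fun setT (T i))
  (hY : forall i, (0 < i)%N -> P [set w | Y i w] = (2^-1 : R)%:E)
  (hV : forall i, (0 < i)%N -> P [set w | V i w] = (2^-1 : R)%:E)
  (hT : forall k j, (2 <= k)%N -> (2 <= j <= k)%N ->
          P [set w | T k.+1 w = j] = ((k.-1)%:R^-1 : R)%:E)
  (hind : all_independent P Y V T)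
  (delta : R -> R)
  (hdelta0 : delta x @[x --> 0^'] --> 0)
  (hdelta : forall e : R, 0 < e -> exists c C : R, 0 < c /\ 0 < C /\
      forall l : nat, (0 < l)%N ->
        (P [set w | (l%:R * (1 - e) <
                   (La Y V T l (Num.truncn (2 * l%:R * (1 - delta e))) w)%:R)%R]
        <= ((C * expR (- (c * l%:R)))%R)%:E)%E)
  (eps : R) (heps : 0 < eps)
  (hpos : 0 < 1 - delta eps)
  (hcond : 2^-1 / (1 - delta eps) < 65 / 100)
  (n : nat) :
  let E3 := [set w | forall l : nat, (20 / 100 : R) * n%:R <= l%:R -> (l <= n)%N ->
               (La Y V T l (Num.truncn (2 * l%:R * (1 - delta eps))) w)%:R
               <= (1 - eps) * l%:R] in
  let E4k := fun k : nat => [set w | (65 / 100 : R) * k%:R <= (La Y V T n k w)%:R] in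
  let E4 := [set w | forall k : nat, (45 / 100 : R) * n%:R <= k%:R -> (k <= n)%N -> E4k k w] in
  let E6k := fun k : nat => [set w | forall p q : seq nat,
               minimal_pair (Zword (V ^~ w) (T ^~ w) k) (Yword (Y ^~ w) n) p q ->
               (La Y V T n k w)%:R <= (1 - eps) * (last 0%N q)%:R] in
  let E6 := [set w | forall k : nat, (45 / 100 : R) * n%:R <= k%:R -> (k <= n)%N -> E6k k w] in
  (forall k : nat, (45 / 100 : R) * n%:R < k%:R -> (k <= n)%N -> E3 `&` E4k k `<=` E6k k)
  /\ (E3 `&` E4 `<=` E6).
Proof.
move=> E3 E4k E4 E6k E6.
have E3_E4k_sub_E6k k : (45 / 100 : R) * n%:R <= k%:R -> (k <= n)%N -> E3 `&` E4k k `<=` E6k k.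
  move=> hk kn w [h3 h4] p q [[pq L_eq] _].
  set L := La Y V T n k w in h4 *; set l := last 0%N q.
  have ln : (l <= n)%N by rewrite -(size_Yword (Y ^~ w) n) (matching_pair_last_leq pq).
  have L_le : (L <= lcs (Zword (V ^~ w) (T ^~ w) k) (Yword (Y ^~ w) l))%N.
    by rewrite /L /La -L_eq -(take_Yword (Y ^~ w) ln) matching_pair_size_leq_lcs_take.
  have Ll : (L <= l)%N by rewrite (leq_trans L_le) // -{2}(size_Yword (Y ^~ w) l) lcs_leq_size_r.
  have kK : (k <= Num.truncn (2 * l%:R * (1 - delta eps)))%N.
    by apply: (leq_truncn_mul hpos hcond); apply: le_trans h4 _; rewrite ler_nat.
  have L_E3 : (L <= La Y V T l (Num.truncn (2 * l%:R * (1 - delta eps))) w)%N.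
    by rewrite (leq_trans L_le) // lcs_subseq_l // subseq_Zword.
  have Llr : L%:R <= l%:R :> R by rewrite ler_nat.
  have l_ge : (20 / 100 : R) * n%:R <= l%:R by move: h4 (ler0n R n); rewrite /E4k /=; lra.
  by apply: le_trans (h3 l l_ge ln); rewrite ler_nat.
split=> [k /ltW | w [h3 h4] k hk kn]; first exact: E3_E4k_sub_E6k.
by apply: E3_E4k_sub_E6k => //; split => //; apply: h4.
Qed.
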